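(* Let $C'$, $S$, $\widehat C$ be as in the context. Then \[ \ell(\widehat C)=\ell(C')+\hat N-\check N . \]
   Context: A column is a finite sequence of entries listed top to bottom; for a sequence $C$, $\ell(C)$ is the number of pairs $i<j$ with $C(i)>C(j)$. $C'=(C'(1),\ldots,C'(c'))$ is a sequence of distinct positive integers and $S$ is a set of $c$ positive integers, $c\in\{c',c'+1\}$, such that with $s_1<\cdots<s_c$ the elements of $S$ and $t_1<\cdots<t_{c'}$ the entries of $C'$ sorted, $s_r\le t_r$ for $r\le c'$. The column $\widehat C$ of length $c$ is built as follows: every $x\in S\cap C'$ is placed in the row where $x$ occurs in $C'$; if $c=c'+1$, the largest element of $S\setminus C'$ is placed in row $c$; the remaining elements of $S\setminus C'$, in decreasing order, are placed in the rows occupied in $C'$ by the elements of $C'\setminus S$, in decreasing order (the $k$-th largest next to the $k$-th largest). Pivots: row $r$ is a pivot row if either $r\le c'$ and $\widehat C(r)<C'(r)$, or $r=c'+1\le c$. With pivot rows $q_1,\ldots,q_p$, put $b_j=\widehat C(q_j)$, $d_j=C'(q_j)$ if $q_j\le c'$ and $d_j=\infty$ otherwise. Define $\check N=\sum_{j=1}^p\#\{r>q_j,\ r\le c':\ C'(r)\in S,\ b_j<C'(r)<d_j\}$ and $\hat N=\sum_{j=1}^p\#\{r<q_j:\ C'(r)\in S,\ b_j<C'(r)<d_j\}$. *)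

From mathcomp Require Import all_boot all_order all_algebra.
Set Implicit Arguments. Unset Strict Implicit. Unset Printing Implicit Defensive.

(* Conventions: columns are sequences (seq nat), rows are 0-indexed
   (row r of the paper is index r-1 here).  The set S is a duplicate-free
   sequence (its order is irrelevant). *)

Definition ell (C : seq nat) : nat :=
  #|[set ij : 'I_(size C) * 'I_(size C) |
      (ij.1 < ij.2)%N && (nth 0 C ij.2 < nth 0 C ij.1)%N]|.

Definition Chat (C' S : seq nat) : seq nat :=
  let c' := size C' in
  let c := size S in
  let D := sort geq [seq x <- C' | x \notin S] in
  let SD := sort geq [seq x <- S | x \notin C'] in
  let E := if c == c'.+1 then behead SD else SD in
  mkseq (fun r =>
    if (r < c')%N then
      let x := nth 0 C' r in
      if x \in S then x else nth 0 E (index x D)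
    else head 0 SD) c.

Definition is_pivot (C' S : seq nat) (q : nat) : bool :=
  ((q < size C') && (nth 0 (Chat C' S) q < nth 0 C' q))
  || ((q == size C') && (q < size S)).

(* x < d_q, with d_q = C'(q) if q is a row of C', and d_q = infinity otherwise *)
Definition lt_d (C' : seq nat) (q x : nat) : bool :=
  if (q < size C')%N then (x < nth 0 C' q)%N else true.

(* the entries of C' in row r lying in S and strictly between b_q and d_q *)
Definition between (C' S : seq nat) (q r : nat) : bool :=
  (nth 0 C' r \in S) && (nth 0 (Chat C' S) q < nth 0 C' r)%N
  && lt_d C' q (nth 0 C' r).

Definition Ncheck (C' S : seq nat) : nat :=
  \sum_(q < size S | is_pivot C' S q)
     #|[set r : 'I_(size C') | (q < r)%N && between C' S q r]|.

Definition Nhat (C' S : seq nat) : nat :=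
  \sum_(q < size S | is_pivot C' S q)
     #|[set r : 'I_(size C') | (r < q)%N && between C' S q r]|.

From mathcomp Require Import all_boot all_order all_algebra.
Import GRing.Theory Num.Theory.
From mathcomp Require Import zify.

Set Implicit Arguments.
Unset Strict Implicit.
Unset Printing Implicit Defensive.

(* For x in C' write g(x) for the entry that \hat C puts in the row of x.
   The hypothesis s_r <= t_r amounts to #{y in C' | y < t} <= #{y in S | y < t}
   for every t; this survives removing the elements common to C' and S, and read
   back on the decreasing enumerations of C' \ S and of the elements of S \ C'
   replacing them it gives g(x) < x.  Moreover g is increasing on C' \ S with
   values in S \ C'.  A four-case check then shows that for rows i < j of C'
     [\hat C(j) < \hat C(i)] + [i pivot, C'(j) in S, b_i < C'(j) < d_i]
       = [C'(j) < C'(i)] + [j pivot, C'(i) in S, b_j < C'(i) < d_j],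
   and when c = c'+1 the new last row holds max (S \ C'), which exceeds every
   replacement, so its inversions are exactly its \hat N terms.  Summing over
   all pairs of rows gives l(\hat C) + \check N = l(C') + \hat N. *)

Lemma count_path_eq0 (T : Type) (leT : rel T) (p : pred T) x u :
  transitive leT -> (forall y z, leT y z -> p z -> p y) ->
  path leT x u -> ~~ p x -> count p u = 0.
Proof.
move=> leT_tr p_down x_u npx; apply/eqP; rewrite -leqn0 leqNgt -has_count -all_predC.
by apply: sub_all (order_path_min leT_tr x_u) => y /p_down /contra; apply.
Qed.

Lemma sorted_nth_count (T : Type) (x0 : T) (leT : rel T) (p : pred T) u i :
  transitive leT -> (forall x y, leT x y -> p y -> p x) ->
  sorted leT u -> i < size u -> p (nth x0 u i) = (i < count p u).
Proof.
move=> leT_tr p_down; elim: u i => [|x u IHu] i //= x_u.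
have count0 := count_path_eq0 leT_tr p_down x_u.
have u_sorted := path_sorted x_u.
case: i => [|i] /= lt_i; have [px | npx] := boolP (p x).
- by [].
- by rewrite count0.
- by rewrite add1n ltnS IHu.
- by rewrite IHu // count0.
Qed.

Lemma ltn_nth_gtn_sorted (s : seq nat) : sorted gtn s ->
  {in [pred i | i < size s] &, {mono nth 0 s : i j /~ i < j}}.
Proof.
have gtn_trans : transitive gtn by move=> a b c /= ab bc; apply: ltn_trans bc ab.
move=> s_gtn; apply/leqW_nmono_in/leq_nmono_in => i j i_s j_s ij.
exact: (sorted_ltn_nth gtn_trans 0 s_gtn) j_s i_s ij.
Qed.

Lemma count_notin_filter (p : pred nat) (s t : seq nat) : uniq s -> uniq t ->
  count p s + count p [seq x <- t | x \notin s] =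
  count p t + count p [seq x <- s | x \notin t].
Proof.
move=> s_uniq t_uniq.
have count_split (u v : seq nat) :
    count p u = count p [seq x <- u | x \in v] + count p [seq x <- u | x \notin v].
  by rewrite -count_cat; apply/permP; rewrite perm_sym; apply/permEl/perm_filterC.
have common : perm_eq [seq x <- s | x \in t] [seq x <- t | x \in s].
  by apply: uniq_perm; rewrite ?filter_uniq // => x; rewrite !mem_filter andbC.
by rewrite (count_split s t) (count_split t s) ((permP common) p) addnAC.
Qed.

Lemma geq_trans : transitive geq.
Proof. by move=> a b c /= ba cb; apply: leq_trans cb ba. Qed.

Lemma geq_total : total geq.
Proof. by move=> a b; rewrite /= orbC leq_total. Qed.

Lemma count_le_sort_dominated (p : pred nat) (s t : seq nat) :
  (forall x y, x <= y -> p y -> p x) -> size t <= size s ->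
  (forall r, r < size t -> nth 0 (sort leq s) r <= nth 0 (sort leq t) r) ->
  count p t <= count p s.
Proof.
move=> p_down le_ts dom; rewrite -(count_sort leq p t) -(count_sort leq p s).
case def_k: (count p (sort leq t)) => [|k] //.
have lt_kt : k < size t by rewrite -(size_sort leq) -ltnS -def_k ltnS count_size.
have nth_count u : k < size u -> p (nth 0 (sort leq u) k) = (k < count p (sort leq u)).
  move=> lt_ku.
  by rewrite (sorted_nth_count 0 leq_trans p_down (sort_sorted leq_total u)) ?size_sort.
rewrite -nth_count ?(leq_trans lt_kt) //.
by apply: p_down (dom k lt_kt) _; rewrite nth_count // def_k.
Qed.

Lemma nth_le_sorted_geq (u v : seq nat) : sorted geq u -> sorted geq v ->
  (forall t, count (leq t) u <= count (leq t) v) ->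
  forall i, i < size u -> nth 0 u i <= nth 0 v i.
Proof.
move=> u_sorted v_sorted le_uv i lt_iu.
have up t x y : geq x y -> t <= y -> t <= x by move=> /= yx ty; apply: leq_trans ty yx.
have lt_iv : i < count (leq (nth 0 u i)) v.
  apply: leq_trans (le_uv _).
  by rewrite -(sorted_nth_count 0 geq_trans (up _) u_sorted lt_iu).
have lt_i_sv : i < size v := leq_trans lt_iv (count_size _ _).
by rewrite (sorted_nth_count 0 geq_trans (up _) v_sorted lt_i_sv).
Qed.

Lemma count_behead_sorted_geq (v : seq nat) t : sorted geq v ->
  count (leq t) (behead v) = (count (leq t) v).-1.
Proof.
case: v => [|x v] //= v_sorted; case: (leqP t x) => [//|lt_xt].
have up y z : geq y z -> t <= z -> t <= y by move=> /= zy tz; apply: leq_trans tz zy.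
by rewrite (count_path_eq0 geq_trans up v_sorted) // -ltnNge.
Qed.

Lemma sum_ord_widen k n (F : nat -> nat) : k <= n ->
  \sum_(i < k) F i = \sum_(i < n) (i < k) * F i.
Proof.
move=> le_kn; rewrite (big_ord_widen _ F le_kn) big_mkcond.
by apply: eq_bigr => i _; rewrite mulnbl.
Qed.

Lemma card_ord_set k (P : pred nat) : #|[set r : 'I_k | P r]| = \sum_(r < k) P r.
Proof. by rewrite -sum1_card big_mkcond; apply: eq_bigr => r _; rewrite inE; case: (P r). Qed.

Lemma sum_card_ord_widen n k (a : pred nat) (P : nat -> nat -> bool) : k <= n ->
  \sum_(q < n | a q) #|[set r : 'I_k | P q r]| =
  \sum_(q < n) \sum_(r < n) [&& a q, r < k & P q r].
Proof.
move=> le_kn; rewrite big_mkcond; apply: eq_bigr => q _.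
rewrite -mulnbl card_ord_set (sum_ord_widen (P q) le_kn) big_distrr.
by apply: eq_bigr => r _; rewrite /= !mulnb.
Qed.

Lemma card_ord_pairs k (P : nat -> nat -> bool) :
  #|[set ij : 'I_k * 'I_k | P ij.1 ij.2]| = \sum_(i < k) #|[set j : 'I_k | P i j]|.
Proof.
under eq_bigr do rewrite card_ord_set.
rewrite pair_big /= -sum1_card big_mkcond; apply: eq_bigr => ij _.
by rewrite inE; case: (P _ _).
Qed.

Lemma card_ord_pairs_widen n k (P : nat -> nat -> bool) : k <= n ->
  #|[set ij : 'I_k * 'I_k | P ij.1 ij.2]| =
  \sum_(i < n) \sum_(j < n) [&& i < k, j < k & P i j].
Proof.
move=> le_kn; rewrite card_ord_pairs.
rewrite (big_ord_widen n (fun i => #|[set j : 'I_k | P i j]|) le_kn).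
exact: (@sum_card_ord_widen n k (fun i => i < k) P le_kn).
Qed.

Definition desc_diff (s t : seq nat) : seq nat := sort geq [seq x <- s | x \notin t].

(* S \ C' in decreasing order, without its maximum when c = c'+1: that one
   goes to the new last row. *)
Definition refill (C' S : seq nat) : seq nat :=
  if size S == (size C').+1 then behead (desc_diff S C') else desc_diff S C'.

Definition Chat_entry (C' S : seq nat) (x : nat) : nat :=
  if x \in S then x else nth 0 (refill C' S) (index x (desc_diff C' S)).

Lemma ChatE C' S : Chat C' S =
  mkseq (fun r => if r < size C' then Chat_entry C' S (nth 0 C' r)
                  else head 0 (desc_diff S C')) (size S).
Proof. by []. Qed.

Lemma size_Chat C' S : size (Chat C' S) = size S.
Proof. exact: size_mkseq. Qed.

Lemma desc_diff_gtn s t : uniq s -> sorted gtn (desc_diff s t).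
Proof.
by move=> s_uniq; rewrite gtn_sorted_uniq_geq sort_uniq filter_uniq ?sort_sorted ?geq_total.
Qed.

Lemma mem_desc_diff s t x : (x \in desc_diff s t) = (x \in s) && (x \notin t).
Proof. by rewrite mem_sort mem_filter andbC. Qed.

Section Column.

Variables C' S : seq nat.
Hypotheses (C'_uniq : uniq C') (S_uniq : uniq S).
Hypothesis size_S : size S = size C' \/ size S = (size C').+1.
Hypothesis S_dominated :
  forall r, r < size C' -> nth 0 (sort leq S) r <= nth 0 (sort leq C') r.

Local Notation D := (desc_diff C' S).
Local Notation SD := (desc_diff S C').
Local Notation E := (refill C' S).
Local Notation g := (Chat_entry C' S).

Let size_C'_S : size C' <= size S.
Proof. by case: size_S => ->. Qed.

Let size_S_eq : size S != (size C').+1 -> size S = size C'.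
Proof. by case: size_S => // ->; rewrite eqxx. Qed.

Lemma count_desc_diff p :
  count p C' + count p SD = count p S + count p D.
Proof. by rewrite !count_sort count_notin_filter. Qed.

Lemma size_desc_diff : size C' + size SD = size S + size D.
Proof. by have := count_desc_diff predT; rewrite !count_predT. Qed.

Lemma count_refill_le t : count (leq t) E <= count (leq t) D.
Proof.
have below_le : count (gtn t) C' <= count (gtn t) S.
  by apply: count_le_sort_dominated => // x y /= ; apply: leq_ltn_trans.
have count_leq_gtn u : count (leq t) u + count (gtn t) u = size u.
  by rewrite -(count_predC (leq t)); congr (_ + _); apply: eq_count => x; rewrite /= ltnNge.
have := count_desc_diff (leq t); have := count_leq_gtn S; have := count_leq_gtn C'.
rewrite /refill; case: eqP => [-> | /eqP/size_S_eq ->]; last lia.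
by rewrite count_behead_sorted_geq ?sort_sorted ?geq_total //; lia.
Qed.

Lemma Chat_entry_in x : x \in S -> g x = x.
Proof. by rewrite /Chat_entry => ->. Qed.

Lemma size_refill : size E = size D.
Proof.
have := size_desc_diff; rewrite /refill.
by case: eqP => [-> | /eqP/size_S_eq ->]; rewrite ?size_behead; lia.
Qed.

Lemma refill_gtn : sorted gtn E.
Proof.
rewrite /refill; have := desc_diff_gtn C' S_uniq.
by case: ifP => // _; case: (desc_diff S C') => //= x s /path_sorted.
Qed.

Lemma mem_refill x : x \in E -> (x \in S) && (x \notin C').
Proof.
by rewrite -mem_desc_diff /refill; case: ifP => // _; apply: mem_behead.
Qed.

Section NotInS.

Variable x : nat.
Hypotheses (x_C' : x \in C') (x_S : x \notin S).

Let x_D : x \in D.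
Proof. by rewrite mem_desc_diff x_C' x_S. Qed.

Let index_x_E : index x D < size E.
Proof. by rewrite size_refill index_mem. Qed.

Lemma Chat_entry_notin : g x = nth 0 E (index x D).
Proof. by rewrite /Chat_entry (negbTE x_S). Qed.

Lemma Chat_entry_in_diff : (g x \in S) && (g x \notin C').
Proof. by rewrite Chat_entry_notin; apply/mem_refill/mem_nth. Qed.

Lemma Chat_entry_lt : g x < x.
Proof.
have /andP[_ gx_C'] := Chat_entry_in_diff.
rewrite ltn_neqAle; apply/andP; split; first by apply: contraNneq gx_C' => ->.
rewrite -{2}(nth_index 0 x_D) Chat_entry_notin.
apply: nth_le_sorted_geq => //; last exact: count_refill_le.
- by apply: sub_sorted refill_gtn => a b; apply: ltnW.
- by rewrite sort_sorted ?geq_total.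
Qed.

End NotInS.

Lemma Chat_entry_mono x y : x \in C' -> x \notin S -> y \in C' -> y \notin S ->
  (g x < g y) = (x < y).
Proof.
move=> x_C' x_S y_C' y_S.
have x_D : x \in D by rewrite mem_desc_diff x_C' x_S.
have y_D : y \in D by rewrite mem_desc_diff y_C' y_S.
rewrite !Chat_entry_notin // (ltn_nth_gtn_sorted refill_gtn) ?inE ?size_refill ?index_mem //.
rewrite -{2}(nth_index 0 x_D) -{2}(nth_index 0 y_D).
by rewrite (ltn_nth_gtn_sorted (desc_diff_gtn S C'_uniq)) ?inE ?index_mem.
Qed.

Lemma Chat_entry_lt_head x : size S = (size C').+1 -> x \in C' -> x \notin S ->
  g x < head 0 SD.
Proof.
move=> c_eq x_C' x_S; have x_D : x \in D by rewrite mem_desc_diff x_C' x_S.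
have size_SD : size SD = (size D).+1.
  by have := size_desc_diff; rewrite c_eq; lia.
rewrite Chat_entry_notin // /refill c_eq eqxx nth_behead -nth0.
by rewrite (ltn_nth_gtn_sorted (desc_diff_gtn C' S_uniq)) ?inE ?size_SD ?ltnS ?index_mem.
Qed.

Lemma nth_Chat_row r : r < size C' -> nth 0 (Chat C' S) r = g (nth 0 C' r).
Proof. by move=> r_C'; rewrite ChatE nth_mkseq ?r_C' // (leq_trans r_C' size_C'_S). Qed.

Lemma nth_Chat_last : size S = (size C').+1 -> nth 0 (Chat C' S) (size C') = head 0 SD.
Proof. by move=> c_eq; rewrite ChatE nth_mkseq ?ltnn // c_eq. Qed.

Lemma is_pivot_row q : q < size C' -> is_pivot C' S q = (nth 0 C' q \notin S).
Proof.
move=> q_C'; rewrite /is_pivot q_C' nth_Chat_row // (ltn_eqF q_C') orbF.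
have [q_S | q_S] := boolP (nth 0 C' q \in S); first by rewrite Chat_entry_in ?ltnn.
exact: Chat_entry_lt (mem_nth 0 q_C') q_S.
Qed.

Lemma between_row q r : q < size C' -> between C' S q r =
  [&& nth 0 C' r \in S, g (nth 0 C' q) < nth 0 C' r & nth 0 C' r < nth 0 C' q].
Proof. by move=> q_C'; rewrite /between /lt_d q_C' nth_Chat_row // andbA. Qed.

Lemma inversion_balance_rows i j : i < j < size C' ->
  (nth 0 (Chat C' S) j < nth 0 (Chat C' S) i) + (is_pivot C' S i && between C' S i j) =
  (nth 0 C' j < nth 0 C' i) + (is_pivot C' S j && between C' S j i).
Proof.
move=> /andP[lt_ij j_C']; have i_C' := ltn_trans lt_ij j_C'.
rewrite !is_pivot_row // !between_row // !nth_Chat_row //.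
have x_C' := mem_nth 0 i_C'; have y_C' := mem_nth 0 j_C'.
have xy : nth 0 C' i != nth 0 C' j by rewrite nth_uniq // ltn_eqF.
move: x_C' y_C' xy; set x := nth 0 C' i; set y := nth 0 C' j => x_C' y_C' xy.
have [x_S | x_S] := boolP (x \in S); have [y_S | y_S] := boolP (y \in S);
  rewrite ?(Chat_entry_in x_S) ?(Chat_entry_in y_S) /= ?andbF //.
- by have := Chat_entry_lt y_C' y_S; lia.
- have := Chat_entry_lt x_C' x_S; have /andP[_ gx_C'] := Chat_entry_in_diff x_C' x_S.
  have gx_y : g x != y by apply: contraNneq gx_C' => ->.
  lia.
- by rewrite Chat_entry_mono.
Qed.

Lemma inversion_balance_last i : size S = (size C').+1 -> i < size C' ->
  (nth 0 (Chat C' S) (size C') < nth 0 (Chat C' S) i) = between C' S (size C') i.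
Proof.
move=> c_eq i_C'; rewrite /between /lt_d ltnn andbT nth_Chat_last // nth_Chat_row //.
have [x_S | x_S] := boolP (nth 0 C' i \in S); first by rewrite Chat_entry_in.
by apply/negbTE; rewrite -leqNgt ltnW // Chat_entry_lt_head // mem_nth.
Qed.

Lemma inversion_balance i j : i < size S -> j < size S ->
  ((i < j) && (nth 0 (Chat C' S) j < nth 0 (Chat C' S) i))
    + [&& is_pivot C' S i, j < size C' & (i < j) && between C' S i j] =
  [&& i < size C', j < size C' & (i < j) && (nth 0 C' j < nth 0 C' i)]
    + [&& is_pivot C' S j, i < size C' & (i < j) && between C' S j i].
Proof.
move=> _ j_S; case: (ltnP i j) => [lt_ij | _]; last by rewrite !andbF.
have i_C' : i < size C' by case: size_S j_S => ->; lia.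
rewrite i_C'; case: (ltnP j (size C')) => [j_C' | le_C'j] /=.
  by apply: inversion_balance_rows; rewrite lt_ij.
have c_eq : size S = (size C').+1 by case: size_S j_S => // ->; rewrite ltnNge le_C'j.
have j_eq : j = size C' by apply/eqP; rewrite eqn_leq le_C'j andbT -ltnS -c_eq.
rewrite andbF addn0 add0n j_eq /is_pivot ltnn eqxx c_eq ltnSn /=.
by rewrite inversion_balance_last.
Qed.

Lemma ell_Chat_add_Ncheck : ell (Chat C' S) + Ncheck C' S = ell C' + Nhat C' S.
Proof.
rewrite /Ncheck (sum_card_ord_widen _ (fun q r => (q < r) && between C' S q r) size_C'_S).
rewrite /Nhat (sum_card_ord_widen _ (fun q r => (r < q) && between C' S q r) size_C'_S).
rewrite /ell.
rewrite (card_ord_pairs_widen (fun i j => (i < j) && (nth 0 C' j < nth 0 C' i)) size_C'_S).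
rewrite (card_ord_pairs_widen (n := size S)
  (fun i j => (i < j) && (nth 0 (Chat C' S) j < nth 0 (Chat C' S) i))) ?size_Chat //.
rewrite [X in _ = _ + X]exchange_big -!big_split; apply: eq_bigr => i _.
rewrite -!big_split; apply: eq_bigr => j _ /=.
by rewrite !ltn_ord; apply: inversion_balance.
Qed.

End Column.

Local Open Scope ring_scope.

Theorem lemma4p8 (C' S : seq nat) :
  uniq C' -> all (fun x => 0 < x)%N C' ->
  uniq S -> all (fun x => 0 < x)%N S ->
  (size S = size C' \/ size S = (size C').+1) ->
  (forall r, (r < size C')%N ->
     (nth 0 (sort leq S) r <= nth 0 (sort leq C') r)%N) ->
  ((ell (Chat C' S))%:Z = (ell C')%:Z + (Nhat C' S)%:Z - (Ncheck C' S)%:Z)%R.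
Proof.
move=> C'_uniq _ S_uniq _ size_S S_dominated.
have := ell_Chat_add_Ncheck C'_uniq S_uniq size_S S_dominated; lia.
Qed.
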